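(* $\mathbf{REG}\subset\mathbf{GRLOWJ}$, i.e., every regular language is accepted by some GRLOWJFA, and the inclusion is proper.
   Context: $\mathbf{REG}$ is the class of regular languages. ''Subword'' means a contiguous factor. A GRLOWJFA is a tuple $\mathcal{A}=(\Sigma,Q,q_0,F,R)$ with $\Sigma$ a finite alphabet, $Q$ a finite state set, $q_0\in Q$, $F\subseteq Q$, and $R\subset Q\times\Sigma^+\times Q$ a finite set of rules such that for each $p\in Q$, $w\in\Sigma^+$ at most one $q$ has $(p,w,q)\in R$ (meaning: go from $p$ to $q$ deleting $w$). $\Sigma_p=\{w:(p,w,q)\in R\text{ for some }q\}$. Configurations lie in $\Sigma^*Q\Sigma^*$. Moves $\curvearrowright$: (1) for $t,u,v\in\Sigma^*$ and $(p,x,q)\in R$: $tpuxv\curvearrowright tuqv$ provided $u$ contains no word of $\Sigma_p$ as a subword and there are no $u_1,x_2\in\Sigma^*$, $u_2,x_1\in\Sigma^+$ with $u=u_1u_2$, $x=x_1x_2$, $u_2x_1=x$; (2) for $x\in\Sigma^+$, $y\in\Sigma^*$ with $y$ containing no word of $\Sigma_p$ as a subword: $xpy\curvearrowright pxy$. $L_{GRL}(\mathcal{A})=\{w\in\Sigma^*: q_0w\curvearrowright^* q_f \text{ for some } q_f\in F\}$. $\mathbf{GRLOWJ}$ is the class of languages so accepted. *)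

From mathcomp Require Import all_boot.
Set Implicit Arguments. Unset Strict Implicit. Unset Printing Implicit Defensive.

Definition is_regular (S : finType) (L : seq S -> Prop) : Prop :=
  exists (St : finType) (delta : St -> S -> St) (s0 : St) (Fa : {set St}),
    forall w, L w <-> foldl delta s0 w \in Fa.

Section GRL.
Variables (S : finType) (Q : finType).

(* A rule (p, x, q) : go from p to q deleting x. The finite rule set R is
   given as a list. *)
Definition rule := (Q * seq S * Q)%type.

Definition valid_rules (R : seq rule) : Prop :=
  (forall p x q, (p, x, q) \in R -> x != [::]) /\
  (forall p x q q', (p, x, q) \in R -> (p, x, q') \in R -> q = q').

Definition Sigma_p (R : seq rule) (p : Q) (w : seq S) : Prop :=
  exists q, (p, w, q) \in R.

Definition avoids (R : seq rule) (p : Q) (u : seq S) : Prop :=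
  forall w, Sigma_p R p w -> ~~ infix w u.

Definition config := (seq S * Q * seq S)%type.

Inductive grl_step (R : seq rule) : config -> config -> Prop :=
| grl_read : forall (t u x v : seq S) (p q : Q),
    (p, x, q) \in R ->
    avoids R p u ->
    ~ (exists u1 u2 x1 x2 : seq S,
          u2 != [::] /\ x1 != [::] /\ u = u1 ++ u2 /\ x = x1 ++ x2 /\ u2 ++ x1 = x) ->
    grl_step R (t, p, u ++ x ++ v) (t ++ u, q, v)
| grl_jump : forall (x y : seq S) (p : Q),
    x != [::] ->
    avoids R p y ->
    grl_step R (x, p, y) ([::], p, x ++ y).

Inductive grl_star (R : seq rule) : config -> config -> Prop :=
| grl_refl : forall c, grl_star R c c
| grl_trans : forall c1 c2 c3, grl_step R c1 c2 -> grl_star R c2 c3 -> grl_star R c1 c3.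

Definition L_GRL (R : seq rule) (q0 : Q) (F : {set Q}) (w : seq S) : Prop :=
  exists qf, qf \in F /\ grl_star R ([::], q0, w) ([::], qf, [::]).

End GRL.

Definition is_GRLOWJ (S : finType) (L : seq S -> Prop) : Prop :=
  exists (Q : finType) (q0 : Q) (F : {set Q}) (R : seq (rule S Q)),
    valid_rules R /\ forall w, L w <-> L_GRL R q0 F w.

(* Regular languages: a DFA is simulated by the rules (p, a, delta p a), one
   for every letter.  Since every letter then belongs to Sigma_p, the prefix u
   skipped by a read must be empty and no jump can occur, so the automaton
   reads its input from left to right exactly like the DFA.

   Properness: the two rules (1, 1, 0) and (0, 0, 1) accept the language of
   words with as many 1s as 0s.  In state p the automaton erases the first
   letter p to its right, jumping back to the start of the word when there is
   none; all along, #0 - #1 of the remaining letters equals [p = 0], and the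
   run can end in state 1 on the empty word exactly when the input was
   balanced.  This language is not regular: a DFA with n states sends two of
   the words 1^0, ..., 1^n, say 1^i and 1^j, to the same state, hence cannot
   separate 1^i 0^i from 1^j 0^i. *)

From mathcomp Require Import all_boot zify.
Set Implicit Arguments. Unset Strict Implicit. Unset Printing Implicit Defensive.

Lemma mem_split_first (T : eqType) (x : T) s :
  x \in s -> exists2 u, x \notin u & exists v, s = u ++ x :: v.
Proof.
move=> xs; set i := index x s.
exists (take i s); first by apply/negP => /index_ltn; rewrite ltnn.
exists (drop i.+1 s).
by rewrite -{1}(cat_take_drop i s) (drop_nth x) ?index_mem // nth_index.
Qed.

Section GRLSemantics.
Variables (S Q : finType) (R : seq (rule S Q)).

Lemma grl_starE c1 c3 :
  grl_star R c1 c3 -> c1 = c3 \/ exists2 c2, grl_step R c1 c2 & grl_star R c2 c3.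
Proof. by case=> [c | c c2 c' st st']; [left | right; exists c2]. Qed.

Lemma letter_no_overlap (c : S) (u : seq S) :
  ~ (exists u1 u2 x1 x2 : seq S,
       u2 != [::] /\ x1 != [::] /\ u = u1 ++ u2 /\ [:: c] = x1 ++ x2 /\ u2 ++ x1 = [:: c]).
Proof.
move=> [u1 [u2 [x1 [x2 [u2_nz [x1_nz [_ [_ /(congr1 size)]]]]]]]].
by rewrite size_cat; case: u2 u2_nz => [|? ?] //; case: x1 x1_nz => [|? ?] //=; lia.
Qed.

Lemma grl_read_letter t u v p a q :
  (p, [:: a], q) \in R -> avoids R p u -> grl_step R (t, p, u ++ a :: v) (t ++ u, q, v).
Proof.
move=> pq pu; apply: (@grl_read _ _ R t u [:: a] v p q) => //.
exact: letter_no_overlap.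
Qed.

Lemma valid_avoids_nil p : valid_rules R -> avoids R p [::].
Proof. by move=> [x_nz _] w [q /x_nz]; rewrite infixs0. Qed.

End GRLSemantics.

Section DFASimulation.
Variables (S St : finType) (delta : St -> S -> St).

Definition dfa_rules : seq (rule S St) :=
  [seq (p, [:: a], delta p a) | p <- enum St, a <- enum S].

Lemma dfa_rulesP p x q : (p, x, q) \in dfa_rules -> exists2 a, x = [:: a] & q = delta p a.
Proof. by case/allpairsP => [[p' a] [_ _ [-> -> ->]]]; exists a. Qed.

Lemma dfa_rules_mem p a : (p, [:: a], delta p a) \in dfa_rules.
Proof. by apply: (allpairs_f (fun p a => (p, [:: a], delta p a))); rewrite mem_enum. Qed.

Lemma dfa_rules_valid : valid_rules dfa_rules.
Proof.
split=> [p x q /dfa_rulesP [a -> _] // | p x q q' /dfa_rulesP [a -> ->]].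
by case/dfa_rulesP => b [->] ->.
Qed.

Lemma dfa_avoids p u : avoids dfa_rules p u -> u = [::].
Proof.
case: u => [|c u] // /(_ [:: c]); rewrite infix1s mem_head.
have c_rule : Sigma_p dfa_rules p [:: c] by exists (delta p c); apply: dfa_rules_mem.
by move/(_ c_rule).
Qed.

Lemma dfa_stepE p w c : grl_step dfa_rules ([::], p, w) c ->
  exists a v, w = a :: v /\ c = ([::], delta p a, v).
Proof.
case E : _ _ / => [t u x v p' q pq pu _ | x y p' x_nz _].
- case: E => t_nil p_p' ->; subst t p'; rewrite (dfa_avoids pu).
  by have [a -> ->] := dfa_rulesP pq; exists a, v.
- by case: E x_nz => <-.
Qed.

Lemma dfa_star_foldl p q w :
  grl_star dfa_rules ([::], p, w) ([::], q, [::]) -> foldl delta p w = q.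
Proof.
elim: w p => [|a w IHw] p /grl_starE [[<-] // | [c st st']].
- by have [a [v []]] := dfa_stepE st.
- by have [b [v [[<- <-] Ec]]] := dfa_stepE st; apply: IHw; rewrite -Ec.
Qed.

Lemma dfa_reach_foldl p w :
  grl_star dfa_rules ([::], p, w) ([::], foldl delta p w, [::]).
Proof.
elim: w p => [|a w IHw] p /=; first exact: grl_refl.
apply: grl_trans (IHw (delta p a)).
apply: (grl_read_letter [::] (u := [::]) w); first exact: dfa_rules_mem.
exact: valid_avoids_nil dfa_rules_valid.
Qed.

End DFASimulation.

Lemma regular_GRLOWJ (S : finType) (L : seq S -> Prop) : is_regular L -> is_GRLOWJ L.
Proof.
move=> [St [delta [s0 [Fa L_dfa]]]].
exists St, s0, Fa, (dfa_rules delta); split=> [|w]; first exact: dfa_rules_valid.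
rewrite L_dfa; split=> [w_acc | [qf [qf_fin /dfa_star_foldl ->]] //].
by exists (foldl delta s0 w); split=> //; apply: dfa_reach_foldl.
Qed.

Definition balance_rules : seq (rule bool bool) :=
  [:: (true, [:: true], false); (false, [:: false], true)].

Definition balanced (p : bool) (s : seq bool) : Prop :=
  count_mem false s = count_mem true s + ~~ p.

Definition config_balanced (c : config bool bool) : Prop :=
  let: (t, p, v) := c in balanced p (t ++ v).

Lemma balance_rulesP p x q : (p, x, q) \in balance_rules -> x = [:: p] /\ q = ~~ p.
Proof. by rewrite !inE => /orP [] /eqP [-> -> ->]. Qed.

Lemma balance_rules_mem p : (p, [:: p], ~~ p) \in balance_rules.
Proof. by case: p. Qed.

Lemma balance_rules_valid : valid_rules balance_rules.
Proof.
split=> [p x q /balance_rulesP [-> _] // | p x q q' /balance_rulesP [_ ->]].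
by case/balance_rulesP => _ ->.
Qed.

Lemma balance_avoids p u : p \notin u -> avoids balance_rules p u.
Proof. by move=> pu w [q /balance_rulesP [-> _]]; rewrite infix1s. Qed.

Lemma balanced_read p s1 s2 : balanced p (s1 ++ p :: s2) <-> balanced (~~ p) (s1 ++ s2).
Proof. by rewrite /balanced !count_cat /= negbK; case: p => /=; lia. Qed.

Lemma count_bool (s : seq bool) : count_mem true s + count_mem false s = size s.
Proof. by rewrite -(count_predC (pred1 true)); congr (_ + _); apply: eq_count; case. Qed.

Lemma balanced_notin p s : balanced p s -> p \notin s -> p /\ s = [::].
Proof.
move=> + /count_memPn; rewrite /balanced; case: p => /= bal p0; last by lia.
by split=> //; apply/eqP; rewrite -size_eq0 -count_bool bal p0.
Qed.

Lemma balance_step_sound c1 c2 :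
  grl_step balance_rules c1 c2 -> config_balanced c2 -> config_balanced c1.
Proof.
case=> [t u x v p q /balance_rulesP [-> ->] _ _ | //].
by move=> /= bal; rewrite catA; apply/balanced_read.
Qed.

Lemma balance_rules_sound c :
  grl_star balance_rules c ([::], true, [::]) -> config_balanced c.
Proof.
move E : ([::], true, [::]) => cf st; elim: st E => [_ <- // | c1 c2 c3 st _ IH E].
exact: balance_step_sound st (IH E).
Qed.

Lemma balance_rules_complete n t p v : size (t ++ v) <= n -> balanced p (t ++ v) ->
  grl_star balance_rules (t, p, v) ([::], true, [::]).
Proof.
elim: n t p v => [|n IHn] t p v.
  rewrite leqn0 size_cat addn_eq0 !size_eq0 => /andP [/eqP -> /eqP ->].
  by case: p => // _; apply: grl_refl.
have read t' v' : p \in v' -> size (t' ++ v') <= n.+1 -> balanced p (t' ++ v') ->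
    grl_star balance_rules (t', p, v') ([::], true, [::]).
  move=> /mem_split_first [u pu [w ->]] size_le bal.
  apply: grl_trans (grl_read_letter t' w (balance_rules_mem p) (balance_avoids pu)) _.
  apply: IHn; first by move: size_le; rewrite !size_cat /=; lia.
  by move: bal; rewrite catA => /balanced_read.
case: (boolP (p \in v)) => pv; first exact: read.
case: t => [|a t] size_le bal.
  by have [-> /= ->] := balanced_notin bal pv; apply: grl_refl.
apply: grl_trans; first by apply: grl_jump; last exact: balance_avoids.
apply: read => //; apply/negPn/negP => pn.
by have [_] := balanced_notin bal pn.
Qed.

Definition equal_counts (w : seq bool) : Prop := count_mem true w = count_mem false w.

Lemma equal_counts_GRLOWJ : is_GRLOWJ equal_counts.
Proof.
exists bool, true, [set true], balance_rules.
split=> [|w]; first exact: balance_rules_valid.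
rewrite /equal_counts; split=> [eq_w | [qf [/set1P -> /balance_rules_sound]]].
  exists true; split; first exact: set11.
  by apply: (balance_rules_complete (n := size w)); rewrite // /balanced addn0.
by rewrite /= /balanced addn0.
Qed.

Lemma regular_nerode_collision (S : finType) (L : seq S -> Prop) (x : nat -> seq S) :
  is_regular L -> exists i j, i != j /\ forall z, L (x i ++ z) <-> L (x j ++ z).
Proof.
move=> [St [delta [s0 [Fa L_dfa]]]].
pose state (i : 'I_#|St|.+1) := foldl delta s0 (x i).
have /injectivePn [i [j ij same]] : ~~ injectiveb state.
  by apply/negP => /injectiveP/leq_card; rewrite card_ord ltnn.
exists (i : nat), (j : nat); split=> [|z]; first exact: ij.
by rewrite !L_dfa !foldl_cat; move: same; rewrite /state => ->.
Qed.

Lemma equal_counts_not_regular : ~ is_regular equal_counts.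
Proof.
move=> /(regular_nerode_collision (fun i => nseq i true)) [i [j [ij]]].
move=> /(_ (nseq i false)) []; rewrite /equal_counts !count_cat !count_nseq /=.
by move=> + _; lia.
Qed.

Theorem proposition3 :
  (forall (S : finType) (L : seq S -> Prop), is_regular L -> is_GRLOWJ L) /\
  (exists (S : finType) (L : seq S -> Prop), is_GRLOWJ L /\ ~ is_regular L).
Proof.
split; first exact: regular_GRLOWJ.
exists bool, equal_counts; split; first exact: equal_counts_GRLOWJ.
exact: equal_counts_not_regular.
Qed.
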